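(* For every nonnegative integer $k$, the following identity of formal power series in an indeterminate $z$ holds (the paper writes $z=[t]_q$): $$\sum_{n\ge 0}W_{m,r}[n,k]_q\,\frac{z^{n}}{[n]_q!}=\frac{1}{[k]_{q^m}!\,[m]_q^{k}}\sum_{j=0}^{k}(-1)^{k-j}\,q^{m\binom{k-j}{2}}\begin{bmatrix}k\\ j\end{bmatrix}_{q^m}e_q\big([jm+r]_q\,z\big),$$ where $e_q(x)=\sum_{n\ge0}\frac{x^n}{[n]_q!}$ is the $q$-exponential function.
   Context: Fix a real number $q>0$ with $q\neq 1$, a positive integer $m$ and a complex number $r$. For complex $x$ put $q^x=e^{x\ln q}$ and $[x]_q=\frac{1-q^x}{1-q}$. For $p>0$, $p\ne 1$ and integers $0\le j\le k$: $[i]_p=\frac{1-p^i}{1-p}$, $[k]_p!=\prod_{i=1}^{k}[i]_p$ (with $[0]_p!=1$), and $\begin{bmatrix}k\\ j\end{bmatrix}_p=\frac{[k]_p!}{[j]_p!\,[k-j]_p!}$. The numbers $W_{m,r}[n,k]_q$ (a $q$-analogue of the $r$-Whitney numbers of the second kind), for integers $n,k$, are defined by $W_{m,r}[0,0]_q=1$, $W_{m,r}[n,k]_q=0$ whenever $n<k$ or $n<0$ or $k<0$, and, for $n\ge 1$ and $0\le k\le n$, $$W_{m,r}[n,k]_q=q^{m(k-1)+r}\,W_{m,r}[n-1,k-1]_q+[mk+r]_q\,W_{m,r}[n-1,k]_q .$$ *)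

From Stdlib Require Import Reals.
Open Scope R_scope.

Definition Cx : Type := (R * R)%type.
Definition RtoC (x : R) : Cx := (x, 0).
Definition Cadd (a b : Cx) : Cx := (fst a + fst b, snd a + snd b).
Definition Copp (a : Cx) : Cx := (- fst a, - snd a).
Definition Cmul (a b : Cx) : Cx :=
  (fst a * fst b - snd a * snd b, fst a * snd b + snd a * fst b).
Definition Cinv (a : Cx) : Cx :=
  let d := fst a * fst a + snd a * snd a in (fst a / d, - snd a / d).
Definition Cdiv (a b : Cx) : Cx := Cmul a (Cinv b).
Fixpoint Cpow (a : Cx) (n : nat) : Cx :=
  match n with O => RtoC 1 | S n' => Cmul a (Cpow a n') end.
Fixpoint Csum (f : nat -> Cx) (k : nat) : Cx :=
  match k with O => f O | S k' => Cadd (Csum f k') (f k) end.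

(* q^x = e^{x ln q} for real q > 0 and complex x = a + i b:
   e^{a ln q} (cos (b ln q) + i sin (b ln q)) *)
Definition Cexpq (q : R) (x : Cx) : Cx :=
  (exp (fst x * ln q) * cos (snd x * ln q),
   exp (fst x * ln q) * sin (snd x * ln q)).

Definition qbrC (q : R) (x : Cx) : Cx :=
  Cdiv (Cadd (RtoC 1) (Copp (Cexpq q x))) (RtoC (1 - q)).

Definition qint (p : R) (i : nat) : R := (1 - p ^ i) / (1 - p).
Fixpoint qfact (p : R) (k : nat) : R :=
  match k with O => 1 | S k' => qint p k * qfact p k' end.
Definition qbinom (p : R) (k j : nat) : R :=
  qfact p k / (qfact p j * qfact p (k - j)).

Definition choose2 (n : nat) : nat := (n * (n - 1) / 2)%nat.

(* W_{m,r}[n,k]_q, with W[0,0]=1, W[n,k]=0 for n<k (and negative indices),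
   W[n,k] = q^{m(k-1)+r} W[n-1,k-1] + [mk+r]_q W[n-1,k].
   The fixpoint automatically yields 0 whenever k > n. *)
Fixpoint Wq (q : R) (m : nat) (r : Cx) (n k : nat) : Cx :=
  match n with
  | O => match k with O => RtoC 1 | S _ => RtoC 0 end
  | S n' =>
      match k with
      | O => Cmul (qbrC q (Cadd (RtoC (INR m * INR 0)) r)) (Wq q m r n' O)
      | S k' =>
          Cadd
            (Cmul (Cexpq q (Cadd (RtoC (INR m * (INR k - 1))) r))
                  (Wq q m r n' k'))
            (Cmul (qbrC q (Cadd (RtoC (INR m * INR k)) r)) (Wq q m r n' k))
      end
  end.

(** Write p = q^m, X_j = [jm + r]_q, and
      c_p(k,j) = (-1)^(k-j) p^C(k-j,2) [k choose j]_p,   D_k = [k]_p! [m]_q^k.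
    Comparing coefficients of z^n, the theorem says that
      D_k W[n,k] = sum_{j<=k} c_p(k,j) X_j^n          (for all n, k).
    We prove this by induction on n, checking that the right-hand side obeys
    the defining recursion of W.  Two facts about the coefficients carry the
    argument:
    - c_p(k+1,j) (p^(k+1) - p^j) = (1 - p^(k+1)) p^k c_p(k,j), which together
      with X_j - X_{k+1} = (p^(k+1) - p^j)/(1-q) q^r gives the recursion step;
    - sum_j c_p(k,j) = 0 for k > 0, the value at x = 1 of Gauss's product
      sum_j c_p(k,j) x^j = (x-1)(x-p)...(x-p^(k-1)), which gives the initial
      values W[0,k] = 0.
    The file first sets up complex ring arithmetic and finite sums, then the
    signed Gaussian coefficients, then the recursion, and finally divides by
    [n]_q! to obtain the stated coefficientwise identity. *)

From Stdlib Require Import Reals Lra Lia Ring.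
Open Scope R_scope.

Definition Csub (a b : Cx) : Cx := Cadd a (Copp b).

Lemma Cx_ring : ring_theory (RtoC 0) (RtoC 1) Cadd Cmul Csub Copp (@eq Cx).
Proof.
  constructor; intros; repeat match goal with a : Cx |- _ => destruct a end;
    unfold Cadd, Cmul, Csub, Copp, RtoC; simpl; try reflexivity; f_equal; ring.
Qed.
Add Ring Cx_ring : Cx_ring.

Lemma RtoC_add (a b : R) : RtoC (a + b) = Cadd (RtoC a) (RtoC b).
Proof. unfold RtoC, Cadd; simpl; f_equal; ring. Qed.

Lemma RtoC_sub (a b : R) : RtoC (a - b) = Csub (RtoC a) (RtoC b).
Proof. unfold RtoC, Csub, Cadd, Copp; simpl; f_equal; ring. Qed.

Lemma RtoC_mul (a b : R) : RtoC (a * b) = Cmul (RtoC a) (RtoC b).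
Proof. unfold RtoC, Cmul; simpl; f_equal; ring. Qed.

Lemma Cdiv_real (z : Cx) (d : R) : d <> 0 -> Cdiv z (RtoC d) = Cmul (RtoC (/ d)) z.
Proof.
  intro Hd; destruct z as [x y]; unfold Cdiv, Cinv, Cmul, RtoC; simpl.
  f_equal; field; exact Hd.
Qed.

Lemma Csum_ext (f g : nat -> Cx) (k : nat) :
  (forall j, (j <= k)%nat -> f j = g j) -> Csum f k = Csum g k.
Proof.
  induction k as [|k IH]; intro Hfg; simpl.
  - apply Hfg; lia.
  - rewrite IH by (intros; apply Hfg; lia); rewrite Hfg by lia; reflexivity.
Qed.

Lemma Csum_scal (c : Cx) (f : nat -> Cx) (k : nat) :
  Csum (fun j => Cmul c (f j)) k = Cmul c (Csum f k).
Proof. induction k as [|k IH]; simpl; [reflexivity | rewrite IH; ring]. Qed.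

Lemma Csum_add (f g : nat -> Cx) (k : nat) :
  Csum (fun j => Cadd (f j) (g j)) k = Cadd (Csum f k) (Csum g k).
Proof. induction k as [|k IH]; simpl; [reflexivity | rewrite IH; ring]. Qed.

Lemma Csum_RtoC (f : nat -> R) (k : nat) :
  Csum (fun j => RtoC (f j)) k = RtoC (sum_f_R0 f k).
Proof.
  induction k as [|k IH]; simpl; [reflexivity | rewrite IH, RtoC_add; reflexivity].
Qed.

Lemma pow_neq_1 (x : R) (i : nat) : 0 < x -> x <> 1 -> (0 < i)%nat -> x ^ i <> 1.
Proof.
  intros Hx0 Hx1 Hi. destruct (Rlt_or_le x 1) as [Hlt | Hge].
  - pose proof (pow_lt_1_compat x i (conj (Rlt_le _ _ Hx0) Hlt) Hi); lra.
  - assert (Hgt : 1 < x) by lra. pose proof (Rlt_pow_R1 x i Hgt Hi); lra.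
Qed.

Lemma qfact_neq_0 (p : R) (n : nat) : 0 < p -> p <> 1 -> qfact p n <> 0.
Proof.
  intros Hp0 Hp1; induction n as [|n IH]; simpl; [lra |].
  apply Rmult_integral_contrapositive; split; [| exact IH].
  pose proof (pow_neq_1 p (S n) Hp0 Hp1 ltac:(lia)).
  unfold qint, Rdiv; apply Rmult_integral_contrapositive; split; [lra |].
  apply Rinv_neq_0_compat; lra.
Qed.

Lemma choose2_S (t : nat) : choose2 (S t) = (choose2 t + t)%nat.
Proof.
  unfold choose2.
  replace (S t * (S t - 1))%nat with (t * (t - 1) + t * 2)%nat by (destruct t; simpl; lia).
  apply Nat.div_add; lia.
Qed.

(** Signed Gaussian coefficients
      c_p(k,j) = (-1)^(k-j) p^C(k-j,2) [k choose j]_p,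
    the coefficients of the product (x - 1)(x - p)...(x - p^(k-1)). *)
Definition sqbinom (p : R) (k j : nat) : R :=
  (-1) ^ (k - j) * p ^ choose2 (k - j) * qbinom p k j.

Definition sqbinom0 (p : R) (k j : nat) : R :=
  if (j <=? k)%nat then sqbinom p k j else 0.

Section SignedGaussianCoefficients.

Variable p : R.
Hypothesis p_pos : 0 < p.
Hypothesis p_neq_1 : p <> 1.

Lemma sqbinom_diag (k : nat) : sqbinom p k k = 1.
Proof.
  pose proof (qfact_neq_0 p k p_pos p_neq_1).
  unfold sqbinom, qbinom, choose2; rewrite Nat.sub_diag; simpl.
  field; assumption.
Qed.

Lemma sqbinom_succ_0 (k : nat) : sqbinom p (S k) 0 = - p ^ k * sqbinom p k 0.
Proof.
  pose proof (qfact_neq_0 p (S k) p_pos p_neq_1) as HSk.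
  pose proof (qfact_neq_0 p k p_pos p_neq_1).
  assert (qint p (S k) <> 0) by (intro h; apply HSk; simpl; rewrite h; ring).
  unfold sqbinom, qbinom; rewrite !Nat.sub_0_r, choose2_S, pow_add.
  simpl qfact; simpl pow at 1. field; auto.
Qed.

Lemma sqbinom_pascal (k j : nat) : (j < k)%nat ->
  sqbinom p (S k) (S j) = sqbinom p k j - p ^ k * sqbinom p k (S j).
Proof.
  intro Hjk; destruct (Nat.le_exists_sub (S j) k Hjk) as [t [-> _]].
  unfold sqbinom, qbinom.
  replace (S (t + S j) - S j)%nat with (S t) by lia.
  replace (t + S j - j)%nat with (S t) by lia.
  replace (t + S j - S j)%nat with t by lia.
  rewrite choose2_S.
  pose proof (qfact_neq_0 p j p_pos p_neq_1). pose proof (qfact_neq_0 p t p_pos p_neq_1).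
  pose proof (qfact_neq_0 p (t + S j) p_pos p_neq_1).
  pose proof (pow_neq_1 p (S t) p_pos p_neq_1 ltac:(lia)).
  pose proof (pow_neq_1 p (S j) p_pos p_neq_1 ltac:(lia)).
  simpl qfact; unfold qint; simpl pow in *.
  replace (p ^ (t + S j)) with (p ^ t * (p * p ^ j)) by (rewrite pow_add; simpl; ring).
  rewrite pow_add.
  generalize dependent (p ^ t); generalize dependent (p ^ j); intros.
  field; repeat split; lra.
Qed.

Lemma sqbinom_succ (k j : nat) : (j <= k)%nat ->
  sqbinom p (S k) j * (p ^ S k - p ^ j) = (1 - p ^ S k) * p ^ k * sqbinom p k j.
Proof.
  intro Hjk; destruct (Nat.le_exists_sub j k Hjk) as [t [-> _]].
  unfold sqbinom, qbinom.
  replace (S (t + j) - j)%nat with (S t) by lia.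
  replace (t + j - j)%nat with t by lia.
  rewrite choose2_S.
  pose proof (qfact_neq_0 p j p_pos p_neq_1). pose proof (qfact_neq_0 p t p_pos p_neq_1).
  pose proof (qfact_neq_0 p (t + j) p_pos p_neq_1).
  pose proof (pow_neq_1 p (S t) p_pos p_neq_1 ltac:(lia)).
  simpl qfact; unfold qint; simpl pow in *.
  replace (p ^ (t + j)) with (p ^ t * p ^ j) by (rewrite pow_add; ring).
  rewrite pow_add.
  generalize dependent (p ^ t); generalize dependent (p ^ j); intros.
  field; repeat split; lra.
Qed.

Lemma sqbinom0_pascal (k j : nat) :
  sqbinom0 p (S k) (S j) = sqbinom0 p k j - p ^ k * sqbinom0 p k (S j).
Proof.
  unfold sqbinom0.
  destruct (Nat.lt_trichotomy j k) as [Hlt | [-> | Hgt]].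
  - replace (S j <=? S k)%nat with true by (symmetry; apply Nat.leb_le; lia).
    replace (j <=? k)%nat with true by (symmetry; apply Nat.leb_le; lia).
    replace (S j <=? k)%nat with true by (symmetry; apply Nat.leb_le; lia).
    apply sqbinom_pascal; exact Hlt.
  - rewrite !Nat.leb_refl.
    replace (S k <=? k)%nat with false by (symmetry; apply Nat.leb_gt; lia).
    rewrite !sqbinom_diag; ring.
  - replace (S j <=? S k)%nat with false by (symmetry; apply Nat.leb_gt; lia).
    replace (j <=? k)%nat with false by (symmetry; apply Nat.leb_gt; lia).
    replace (S j <=? k)%nat with false by (symmetry; apply Nat.leb_gt; lia).
    ring.
Qed.

Lemma gauss_product_succ (k : nat) (x : R) :
  sum_f_R0 (fun j => sqbinom0 p (S k) j * x ^ j) (S k)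
  = (x - p ^ k) * sum_f_R0 (fun j => sqbinom0 p k j * x ^ j) k.
Proof.
  set (F := fun j => sqbinom0 p k j * x ^ j).
  assert (Htop : F (S k) = 0).
  { unfold F, sqbinom0. replace (S k <=? k)%nat with false
      by (symmetry; apply Nat.leb_gt; lia). ring. }
  assert (Hshift : sum_f_R0 (fun i => F (S i)) k = sum_f_R0 F k - F 0%nat).
  { pose proof (decomp_sum F (S k) ltac:(lia)) as Hdecomp; simpl pred in Hdecomp.
    rewrite tech5, Htop in Hdecomp; lra. }
  rewrite decomp_sum by lia; simpl pred.
  rewrite (sum_eq _ (fun i => x * F i + (- p ^ k) * F (S i)))
    by (intros; unfold F; rewrite sqbinom0_pascal; simpl; ring).
  rewrite plus_sum.
  rewrite (sum_eq (fun i => x * F i) (fun i => F i * x)) by (intros; ring).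
  rewrite (sum_eq (fun i => - p ^ k * F (S i)) (fun i => F (S i) * (- p ^ k)))
    by (intros; ring).
  rewrite <- !scal_sum, Hshift.
  unfold F, sqbinom0; simpl. rewrite sqbinom_succ_0. ring.
Qed.

(** At [x = 1] the product vanishes: the signed coefficients sum to zero. *)
Lemma sqbinom_sum_0 (k : nat) : (0 < k)%nat -> sum_f_R0 (sqbinom p k) k = 0.
Proof.
  intro Hk.
  assert (Hzero : forall n, sum_f_R0 (fun j => sqbinom0 p (S n) j * 1 ^ j) (S n) = 0).
  { induction n as [|n IH]; rewrite gauss_product_succ.
    - simpl; ring.
    - rewrite IH; ring. }
  destruct k as [|k]; [lia |].
  rewrite <- (Hzero k). apply sum_eq; intros j Hj.
  unfold sqbinom0; replace (j <=? S k)%nat with true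
    by (symmetry; apply Nat.leb_le; lia).
  rewrite pow1; ring.
Qed.

End SignedGaussianCoefficients.

Lemma Cexpq_shift (q a : R) (z : Cx) :
  Cexpq q (Cadd (RtoC a) z) = Cmul (RtoC (exp (a * ln q))) (Cexpq q z).
Proof.
  destruct z as [x y]; unfold Cexpq, Cadd, Cmul, RtoC; simpl.
  rewrite Rplus_0_l, Rmult_plus_distr_r, exp_plus; f_equal; ring.
Qed.

Lemma exp_INR_ln (q : R) (n : nat) : 0 < q -> exp (INR n * ln q) = q ^ n.
Proof. intro Hq; rewrite <- Rpower_pow by exact Hq; reflexivity. Qed.

Definition qnode (q : R) (m : nat) (r : Cx) (j : nat) : Cx :=
  qbrC q (Cadd (RtoC (INR j * INR m)) r).

Definition wdenom (q : R) (m k : nat) : R := qfact (q ^ m) k * qint q m ^ k.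

Definition psum (q : R) (m : nat) (r : Cx) (k n : nat) : Cx :=
  Csum (fun j => Cmul (RtoC (sqbinom (q ^ m) k j)) (Cpow (qnode q m r j) n)) k.

Section Recursion.

Variables (q : R) (m : nat) (r : Cx).
Hypothesis q_pos : 0 < q.
Hypothesis q_neq_1 : q <> 1.
Hypothesis m_pos : (0 < m)%nat.

Let p := q ^ m.

Lemma qm_pos : 0 < p.
Proof. apply pow_lt; exact q_pos. Qed.

Lemma qm_neq_1 : p <> 1.
Proof. apply pow_neq_1; assumption. Qed.

Lemma qnode_sub (i j : nat) :
  Csub (qnode q m r j) (qnode q m r i) = Cmul (RtoC ((p ^ i - p ^ j) / (1 - q))) (Cexpq q r).
Proof.
  assert (Hnode : forall l, qnode q m r l
    = Cmul (RtoC (/ (1 - q))) (Csub (RtoC 1) (Cmul (RtoC (p ^ l)) (Cexpq q r)))).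
  { intro l; unfold qnode, qbrC; rewrite Cdiv_real by lra.
    rewrite Cexpq_shift, <- mult_INR, Nat.mul_comm, exp_INR_ln, pow_mult by exact q_pos.
    reflexivity. }
  rewrite !Hnode; unfold Rdiv; rewrite !RtoC_mul, RtoC_sub; unfold Csub; ring.
Qed.

Lemma Wq_weight (k : nat) :
  Cexpq q (Cadd (RtoC (INR m * (INR (S k) - 1))) r) = Cmul (RtoC (p ^ k)) (Cexpq q r).
Proof.
  rewrite Cexpq_shift.
  replace (INR m * (INR (S k) - 1)) with (INR (m * k)) by (rewrite mult_INR, S_INR; ring).
  rewrite exp_INR_ln, pow_mult by exact q_pos; reflexivity.
Qed.

Lemma wdenom_succ (k : nat) :
  wdenom q m (S k) = (1 - p ^ S k) / (1 - q) * wdenom q m k.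
Proof.
  pose proof qm_neq_1.
  unfold wdenom; simpl qfact; unfold qint; fold p; simpl pow.
  field; split; lra.
Qed.

Lemma wdenom_neq_0 (k : nat) : wdenom q m k <> 0.
Proof.
  pose proof qm_neq_1.
  unfold wdenom; apply Rmult_integral_contrapositive; split.
  - apply qfact_neq_0; [exact qm_pos | exact qm_neq_1].
  - apply pow_nonzero; unfold qint, Rdiv; fold p.
    apply Rmult_integral_contrapositive; split; [lra | apply Rinv_neq_0_compat; lra].
Qed.

(** Multiplying by one more node: the power sums satisfy the same
    recursion in (n, k) as the numbers W[n,k], scaled by the denominators. *)
Lemma psum_succ (k n : nat) :
  psum q m r (S k) (S n)
  = Cadd (Cmul (qnode q m r (S k)) (psum q m r (S k) n))
         (Cmul (RtoC ((1 - p ^ S k) / (1 - q) * p ^ k))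
               (Cmul (Cexpq q r) (psum q m r k n))).
Proof.
  unfold psum; fold p.
  set (X := qnode q m r).
  rewrite (Csum_ext _ (fun j => Cadd (Cmul (X (S k)) (Cmul (RtoC (sqbinom p (S k) j)) (Cpow (X j) n)))
                                (Cmul (Csub (X j) (X (S k))) (Cmul (RtoC (sqbinom p (S k) j)) (Cpow (X j) n)))))
    by (intros; simpl Cpow; unfold Csub; ring).
  rewrite Csum_add, Csum_scal; f_equal.
  assert (Hself : Csub (X (S k)) (X (S k)) = RtoC 0) by (unfold Csub; ring).
  cbn [Csum]; rewrite Hself.
  rewrite (Csum_ext _ (fun j => Cmul (RtoC ((1 - p ^ S k) / (1 - q) * p ^ k))
                                  (Cmul (Cexpq q r) (Cmul (RtoC (sqbinom p k j)) (Cpow (X j) n))))).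
  - rewrite !Csum_scal; ring.
  - intros j Hj; unfold X; rewrite qnode_sub.
    assert (Hcoef : (p ^ S k - p ^ j) / (1 - q) * sqbinom p (S k) j
                    = (1 - p ^ S k) / (1 - q) * p ^ k * sqbinom p k j).
    { unfold Rdiv.
      replace ((p ^ S k - p ^ j) * / (1 - q) * sqbinom p (S k) j)
        with (sqbinom p (S k) j * (p ^ S k - p ^ j) * / (1 - q)) by ring.
      rewrite (sqbinom_succ p qm_pos qm_neq_1 k j Hj); ring. }
    transitivity (Cmul (RtoC ((p ^ S k - p ^ j) / (1 - q) * sqbinom p (S k) j))
                       (Cmul (Cexpq q r) (Cpow (qnode q m r j) n)));
      [rewrite RtoC_mul; ring |].
    rewrite Hcoef, (RtoC_mul _ (sqbinom p k j)); ring.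
Qed.

Lemma wdenom_Wq (n : nat) : forall k : nat,
  Cmul (RtoC (wdenom q m k)) (Wq q m r n k) = psum q m r k n.
Proof.
  pose proof qm_pos as Hp0; pose proof qm_neq_1 as Hp1.
  induction n as [|n IH]; intros [|k]; cbn [Wq].
  - unfold psum; cbn [Csum Cpow]; rewrite sqbinom_diag by assumption.
    unfold wdenom; cbn [qfact pow]; rewrite Rmult_1_l; ring.
  - unfold psum; fold p.
    rewrite (Csum_ext _ (fun j => RtoC (sqbinom p (S k) j))) by (intros; cbn [Cpow]; ring).
    rewrite Csum_RtoC, sqbinom_sum_0 by (assumption || lia); ring.
  - rewrite Rmult_comm; fold (qnode q m r 0).
    transitivity (Cmul (qnode q m r 0) (Cmul (RtoC (wdenom q m 0)) (Wq q m r n 0))); [ring |].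
    rewrite IH; unfold psum; cbn [Csum Cpow]; ring.
  - rewrite Wq_weight, Rmult_comm; fold (qnode q m r (S k)).
    rewrite psum_succ, <- !IH, wdenom_succ.
    rewrite (RtoC_mul ((1 - p ^ S k) / (1 - q)) (wdenom q m k)),
            (RtoC_mul ((1 - p ^ S k) / (1 - q)) (p ^ k)); ring.
Qed.

Lemma Wq_explicit (n k : nat) :
  Wq q m r n k = Cmul (RtoC (/ wdenom q m k)) (psum q m r k n).
Proof.
  rewrite <- wdenom_Wq.
  transitivity (Cmul (RtoC (/ wdenom q m k * wdenom q m k)) (Wq q m r n k)).
  - rewrite Rinv_l by apply wdenom_neq_0; ring.
  - rewrite RtoC_mul; ring.
Qed.

End Recursion.

(** Dividing the explicit formula by [n]_q! gives the coefficient of z^n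
    on both sides of the generating-function identity. *)
Theorem theorem4 (q : R) (m : nat) (r : Cx) (k : nat) :
  0 < q -> q <> 1 -> (0 < m)%nat ->
  forall n : nat,
    Cdiv (Wq q m r n k) (RtoC (qfact q n)) =
    Cmul (RtoC (1 / (qfact (q ^ m) k * (qint q m) ^ k)))
      (Csum (fun j =>
         Cmul (RtoC ((-1) ^ (k - j) * q ^ (m * choose2 (k - j))
                     * qbinom (q ^ m) k j))
              (Cdiv (Cpow (qbrC q (Cadd (RtoC (INR j * INR m)) r)) n)
                    (RtoC (qfact q n)))) k).
Proof.
  intros Hq0 Hq1 Hm n.
  pose proof (qfact_neq_0 q n Hq0 Hq1) as Hfact.
  rewrite Cdiv_real, Wq_explicit by assumption.
  rewrite (Csum_ext _ (fun j => Cmul (RtoC (/ qfact q n))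
             (Cmul (RtoC (sqbinom (q ^ m) k j)) (Cpow (qnode q m r j) n)))).
  - rewrite Csum_scal; unfold psum, wdenom, Rdiv; rewrite Rmult_1_l; ring.
  - intros j _; rewrite Cdiv_real by assumption.
    unfold sqbinom, qnode; rewrite pow_mult; ring.
Qed.
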